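(* Let $\mathcal{C}$ be a class of finite graphs. (a) $\mathcal{C}$ is $\mathrm{MSO}_2$-orderable if, and only if, $\mathrm{IS}(\mathcal{C})$ is $\mathrm{MSO}_1$-orderable. (b) $\mathcal{C}$ has property $\mathsf{SEP}$ if, and only if, $\mathrm{IS}(\mathcal{C})$ has property $\mathsf{CUT}$.
   Context: For a graph $G=\langle V,E\rangle$ its incidence split graph $\mathrm{IS}(G)$ has vertex set $V\cup E$ and edges: $\{v,e\}$ whenever $v\in V$ is an end-vertex of $e\in E$, together with $\{x,y\}$ for all distinct $x,y\in V$; $\mathrm{IS}(\mathcal{C})=\{\mathrm{IS}(G):G\in\mathcal{C}\}$. $\lfloor G\rfloor$ is the structure (universe $V$, edge relation) and $\lceil G\rceil$ the structure (universe $V\cup E$, incidence relation $\subseteq V\times E$). An MSO-formula $\varphi(x,y;Z_0,\dots,Z_{n-1})$ defines an order on a class of structures if for every nonempty member $\mathfrak{A}$ there are $P_i\subseteq A$ with $\{(a,b):\mathfrak{A}\models\varphi(a,b;\bar P)\}$ a linear order on $A$; a graph class is $\mathrm{MSO}_1$-orderable (resp. $\mathrm{MSO}_2$-orderable) if some formula defines an order on $\{\lfloor G\rfloor\}$ (resp. $\{\lceil G\rceil\}$). $\mathrm{Sep}(G,k)$ is the maximum over vertex sets $S$, $|S|\le k$, of the number of connected components of $G-S$; $\mathsf{SEP}$ means there is $f$ with $\mathrm{Sep}(G,k)\le f(k)$ for all members and all $k$. A graph with ports in $[k]$ is a graph with $\pi:V\to[k]$; for $R\subseteq[k]\times[k]$,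 $G\otimes_R H$ is the disjoint union plus all edges $\{x,y\}$ with $x,y$ in different operands, labels $a,b$ with $(a,b)\in R$; $\mathrm{Del}$ deletes labels; $\mathrm{Cut}(G,k)$ is the maximal $m$ with $G\cong\mathrm{Del}(H_0\otimes_R\cdots\otimes_R H_{m-1})$ for nonempty $H_i$ with ports in $[k]$ and some $R$; $\mathsf{CUT}$ means there is $f$ with $\mathrm{Cut}(G,k)\le f(k)$ for all members and all $k$. *)

From mathcomp Require Import all_boot.
Unset Printing Implicit Defensive.

Record graph := Graph {
  gV : finType;
  gadj : rel gV;
  gadj_sym : symmetric gadj;
  gadj_irr : irreflexive gadj }.
Arguments gadj {g} _ _.

Definition is_edge (G : graph) : pred {set gV G} :=
  fun e => [exists x, exists y, gadj x y && (e == [set x; y])].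
Definition edge_of (G : graph) := {e : {set gV G} | is_edge G e}.

Definition incidence (G : graph) : rel (gV G + edge_of G)%type :=
  fun a b => match a, b with
             | inl v, inr e => v \in val e
             | _, _ => false
             end.

Definition IS_adj (G : graph) : rel (gV G + edge_of G)%type :=
  fun a b => match a, b with
             | inl x, inl y => x != y
             | inl v, inr e => v \in val e
             | inr e, inl v => v \in val e
             | inr _, inr _ => false
             end.

Lemma IS_adj_sym G : symmetric (IS_adj G).
Proof. by move=> [x|e] [y|f] //=; rewrite eq_sym. Qed.

Lemma IS_adj_irr G : irreflexive (IS_adj G).
Proof. by move=> [x|e] //=; rewrite eqxx. Qed.

Definition IS (G : graph) : graph :=
  @Graph (gV G + edge_of G)%type (IS_adj G) (IS_adj_sym G) (IS_adj_irr G).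

Definition IS_class (C : graph -> Prop) : graph -> Prop :=
  fun H => exists G, C G /\ H = IS G.

Inductive mso : Type :=
| MRel of nat & nat
| MEq  of nat & nat
| MIn  of nat & nat
| MNot of mso
| MOr  of mso & mso
| MEx1 of nat & mso
| MEx2 of nat & mso.

Fixpoint sat {A : finType} (R : rel A) (v : nat -> A) (V : nat -> {set A})
    (f : mso) : Prop :=
  match f with
  | MRel i j => R (v i) (v j)
  | MEq i j => v i = v j
  | MIn i j => v i \in V j
  | MNot g => ~ sat R v V g
  | MOr g h => sat R v V g \/ sat R v V h
  | MEx1 i g => exists a : A, sat R (fun l => if l == i then a else v l) V g
  | MEx2 j g => exists X : {set A}, sat R v (fun l => if l == j then X else V l) g
  end.

Fixpoint mso_wf (fo so : nat -> bool) (f : mso) : bool :=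
  match f with
  | MRel i j => fo i && fo j
  | MEq i j => fo i && fo j
  | MIn i j => fo i && so j
  | MNot g => mso_wf fo so g
  | MOr g h => mso_wf fo so g && mso_wf fo so h
  | MEx1 i g => mso_wf (fun l => (l == i) || fo l) so g
  | MEx2 j g => mso_wf fo (fun l => (l == j) || so l) g
  end.

(* phi(x, y; Z_0, ..., Z_{n-1}) : free first-order variables among x = 0, y = 1,
   free set variables among 0, ..., n-1 *)
Definition mso_form2 (n : nat) (phi : mso) : bool :=
  mso_wf (fun i => i <= 1) (fun j => j < n) phi.

Definition linear_order {A : Type} (r : A -> A -> Prop) : Prop :=
  [/\ forall a, r a a,
      forall a b, r a b -> r b a -> a = b,
      forall a b c, r a b -> r b c -> r a c
    & forall a b, r a b \/ r b a].

Definition asg2 {A : Type} (a b : A) : nat -> A :=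
  fun i => if i == 0 then a else b.

Definition defines_order_in (A : finType) (R : rel A) (phi : mso) : Prop :=
  exists P : nat -> {set A},
    linear_order (fun a b => sat R (asg2 a b) P phi).

Definition MSO1_orderable (C : graph -> Prop) : Prop :=
  exists (n : nat) (phi : mso), mso_form2 n phi /\
    forall G, C G -> 0 < #|gV G| -> defines_order_in _ (@gadj G) phi.

Definition MSO2_orderable (C : graph -> Prop) : Prop :=
  exists (n : nat) (phi : mso), mso_form2 n phi /\
    forall G, C G -> 0 < #|{: (gV G + edge_of G)%type}| ->
      defines_order_in _ (incidence G) phi.

Definition del_adj (G : graph) (S : {set gV G}) : rel (gV G) :=
  fun x y => [&& x \notin S, y \notin S & gadj x y].

Definition ncomp_minus (G : graph) (S : {set gV G}) : nat :=
  n_comp (del_adj G S) (~: S).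

Definition Sep (G : graph) (k : nat) : nat :=
  \max_(S : {set gV G} | #|S| <= k) ncomp_minus G S.

Definition SEP (C : graph -> Prop) : Prop :=
  exists f : nat -> nat, forall G, C G -> forall k, Sep G k <= f k.

(* H_0 (x)_R ... (x)_R H_{m-1}, ports in [k] = 'I_k, labels deleted *)
Definition glue (m k : nat) (H : 'I_m -> graph) (p : forall i, gV (H i) -> 'I_k)
    (R : rel 'I_k) : rel {i : 'I_m & gV (H i)} :=
  fun u v =>
    if tag u == tag v then gadj (tagged u) (tagged_as u v)
    else R (p _ (tagged u)) (p _ (tagged v)) || R (p _ (tagged v)) (p _ (tagged u)).

Definition iso_to (G : graph) (T : finType) (e : rel T) : Prop :=
  exists f : gV G -> T, bijective f /\ forall x y, gadj x y = e (f x) (f y).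

Definition cut_decomp (G : graph) (k m : nat) : Prop :=
  exists (H : 'I_m -> graph) (p : forall i, gV (H i) -> 'I_k) (R : rel 'I_k),
    (forall i, 0 < #|gV (H i)|) /\ iso_to G _ (glue m k H p R).

(* Cut(G,k) <= f(k), Cut(G,k) being the maximal m with cut_decomp G k m *)
Definition CUT (C : graph -> Prop) : Prop :=
  exists f : nat -> nat, forall G, C G -> forall k m, cut_decomp G k m -> m <= f k.

(* (a) IS(G) and the incidence structure of G share the universe V + E,
   and each relation is MSO-definable from the other once the vertex set
   is available as a set parameter: [v] is incident to [e] iff [v] is a
   vertex, [e] is not, and they are adjacent in IS(G); conversely two
   elements are adjacent in IS(G) iff they are distinct vertices or an
   incident pair.  Substituting these definitions for the atoms of an
   order-defining formula, with a fresh set variable for V, transfers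
   definable orders in both directions.

   (b) Cut decompositions are first recast as labelled partitions.  Given
   one of IS(G) with k labels and m parts, the vertices incident to an
   edge of another part form a set S of size at most 4k (per label they
   lie on two edges), and every part contains a vertex of S, a component
   of G - S, or only edges inside S; hence m <= |S| + 2^|S| + Sep(G,4k).
   Conversely, the components of G - S, for |S| <= k, are the parts of a
   cut decomposition of IS(G) with 2k + 2 labels. *)

From Stdlib Require Import Setoid.
From mathcomp Require Import all_boot zify.
Unset Printing Implicit Defensive.

Fixpoint set_bound (f : mso) : nat :=
  match f with
  | MIn _ j => j.+1
  | MNot g => set_bound g
  | MOr g h => maxn (set_bound g) (set_bound h)
  | MEx1 _ g => set_bound g
  | MEx2 j g => maxn j.+1 (set_bound g)
  | _ => 0
  end.

Fixpoint subst_rel (rho : nat -> nat -> mso) (f : mso) : mso :=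
  match f with
  | MRel i j => rho i j
  | MNot g => MNot (subst_rel rho g)
  | MOr g h => MOr (subst_rel rho g) (subst_rel rho h)
  | MEx1 i g => MEx1 i (subst_rel rho g)
  | MEx2 j g => MEx2 j (subst_rel rho g)
  | g => g
  end.

Definition MAnd (f g : mso) : mso := MNot (MOr (MNot f) (MNot g)).

Section Semantics.
Variable A : finType.

Lemma sat_ext_sets (R : rel A) (f : mso) (v : nat -> A) (V V' : nat -> {set A}) :
  (forall j, j < set_bound f -> V j = V' j) -> (sat R v V f <-> sat R v V' f).
Proof.
elim: f v V V' => [i j|i j|i j|g IH|g IHg h IHh|i g IH|j g IH] v V V' E //=.
- by rewrite E.
- by rewrite (IH v V V').
- by rewrite (IHg v V V') ?(IHh v V V') // => l Hl; apply: E; rewrite /= leq_max Hl ?orbT.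
- by split=> -[a Ha]; exists a; [rewrite -(IH _ V V') | rewrite (IH _ V V')].
- have E' X l : l < set_bound g ->
      (if l == j then X else V l) = (if l == j then X else V' l).
    by move=> Hl; case: (l == j) => //; apply: E; rewrite /= leq_max Hl orbT.
  by split=> -[X HX]; exists X; [rewrite -(IH _ _ _ (E' X)) | rewrite (IH _ _ _ (E' X))].
Qed.

Lemma sat_subst_rel {R R' : rel A} {rho : nat -> nat -> mso} {z : nat} {Z : {set A}} :
  (forall v V i j, V z = Z -> (sat R' v V (rho i j) <-> R (v i) (v j))) ->
  forall f v V, set_bound f <= z -> V z = Z ->
    (sat R' v V (subst_rel rho f) <-> sat R v V f).
Proof.
move=> Hrho; elim=> [i j|i j|i j|g IH|g IHg h IHh|i g IH|j g IH] v V /= Hz HZ //.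
- exact: Hrho.
- by rewrite IH.
- by move: Hz; rewrite geq_max => /andP[hg hh]; rewrite IHg ?IHh.
- by split=> -[a Ha]; exists a; move: Ha; rewrite IH.
- move: Hz; rewrite geq_max => /andP[hj hg].
  have zj : (z == j) = false by apply/negbTE; rewrite neq_ltn hj orbT.
  by split=> -[X HX]; exists X; move: HX; rewrite IH //= zj.
Qed.

End Semantics.
Arguments sat_subst_rel {A R R' rho z Z}.

Lemma wf_weaken (f : mso) (fo so fo' so' : nat -> bool) : mso_wf fo so f ->
  (forall i, fo i -> fo' i) -> (forall j, so j -> so' j) -> mso_wf fo' so' f.
Proof.
elim: f fo so fo' so' => [i j|i j|i j|g IH|g IHg h IHh|i g IH|j g IH] fo so fo' so' /= W Hf Hs.
- by case/andP: W => /Hf -> /Hf ->.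
- by case/andP: W => /Hf -> /Hf ->.
- by case/andP: W => /Hf -> /Hs ->.
- exact: IH W Hf Hs.
- by case/andP: W => /IHg-> // /IHh->.
- by apply: IH W _ Hs => l /orP[->//|/Hf ->]; rewrite orbT.
- by apply: IH W Hf _ => l /orP[->//|/Hs ->]; rewrite orbT.
Qed.

Lemma wf_subst_rel {rho : nat -> nat -> mso} {z : nat} :
  (forall (fo so : nat -> bool) i j, fo i -> fo j -> so z -> mso_wf fo so (rho i j)) ->
  forall f fo so, mso_wf fo so f -> so z -> mso_wf fo so (subst_rel rho f).
Proof.
move=> Hrho; elim=> [i j|i j|i j|g IH|g IHg h IHh|i g IH|j g IH] fo so /= W Hz //.
- by case/andP: W => *; apply: Hrho.
- exact: IH.
- by case/andP: W => /IHg-> // /IHh->.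
- exact: IH.
- by apply: IH => //; rewrite Hz orbT.
Qed.

Lemma linear_order_iff {T : Type} (r r' : T -> T -> Prop) :
  (forall a b, r a b <-> r' a b) -> linear_order r -> linear_order r'.
Proof.
move=> E [refl anti trans total]; split.
- by move=> a; apply/E.
- by move=> a b /E ? /E ?; apply: anti.
- by move=> a b c /E ? /E ?; apply/E; apply: (trans a b c).
- by move=> a b; case: (total a b) => /E; [left|right].
Qed.

Definition interprets (rho : nat -> nat -> nat -> mso) {A : finType}
    (R R' : rel A) (Z : {set A}) : Prop :=
  forall z v V i j, V z = Z -> (sat R' v V (rho z i j) <-> R (v i) (v j)).

Definition interpretation_wf (rho : nat -> nat -> nat -> mso) : Prop :=
  forall z (fo so : nat -> bool) i j, fo i -> fo j -> so z -> mso_wf fo so (rho z i j).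

Lemma form2_subst_rel rho n phi z : interpretation_wf rho ->
  mso_form2 n phi -> n <= z -> mso_form2 z.+1 (subst_rel (rho z) phi).
Proof.
move=> Hrho Wf nz; rewrite /mso_form2; apply: (wf_subst_rel (Hrho z)) => //.
by apply: wf_weaken Wf _ _ => // l /leq_trans; apply; rewrite ltnW.
Qed.

Lemma defines_order_subst_rel rho (A : finType) (R R' : rel A) (Z : {set A}) phi z :
  interprets rho R R' Z -> set_bound phi <= z ->
  defines_order_in A R phi -> defines_order_in A R' (subst_rel (rho z) phi).
Proof.
move=> Hrho Hz [P HP]; exists (fun l => if l == z then Z else P l).
apply: linear_order_iff HP => a b.
rewrite (sat_subst_rel (Hrho z)) //= ?eqxx //.
apply: sat_ext_sets => l hl /=.
by rewrite ifF //; apply/negbTE; rewrite neq_ltn (leq_trans hl Hz).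
Qed.

Definition orderable_by (C : graph -> Prop)
    (R : forall G : graph, rel (gV G + edge_of G)%type) : Prop :=
  exists (n : nat) (phi : mso), mso_form2 n phi /\
    forall G, C G -> 0 < #|{: (gV G + edge_of G)%type}| ->
      defines_order_in _ (R G) phi.

Lemma orderable_by_transfer (C : graph -> Prop) rho
    (Z : forall G : graph, {set (gV G + edge_of G)%type})
    (R R' : forall G : graph, rel (gV G + edge_of G)%type) :
  interpretation_wf rho -> (forall G, interprets rho (R G) (R' G) (Z G)) ->
  orderable_by C R -> orderable_by C R'.
Proof.
move=> rho_wf Hrho [n [phi [Wf Hord]]].
pose z := maxn n (set_bound phi).
exists z.+1, (subst_rel (rho z) phi); split.
  by apply: form2_subst_rel rho_wf Wf _; rewrite leq_maxl.
move=> G CG nonempty; apply: defines_order_subst_rel (Hrho G) _ (Hord G CG nonempty).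
exact: leq_maxr.
Qed.

Lemma MSO1_orderable_IS_class (C : graph -> Prop) :
  MSO1_orderable (IS_class C) <-> orderable_by C IS_adj.
Proof.
split=> -[n [phi [Wf Hord]]]; exists n, phi; split=> //.
- by move=> G CG; apply: (Hord (IS G)); exists G.
- by move=> _ [G [CG ->]]; apply: Hord.
Qed.

Definition vertex_set (G : graph) : {set (gV G + edge_of G)%type} :=
  [set x | if x is inl _ then true else false].

Definition incidence_in_IS (z i j : nat) : mso :=
  MAnd (MIn i z) (MAnd (MNot (MIn j z)) (MRel i j)).

Definition IS_adj_in_incidence (z i j : nat) : mso :=
  MOr (MAnd (MIn i z) (MAnd (MIn j z) (MNot (MEq i j))))
      (MOr (MRel i j) (MRel j i)).

Lemma incidence_in_IS_wf : interpretation_wf incidence_in_IS.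
Proof. by move=> z fo so i j /= -> -> ->. Qed.

Lemma IS_adj_in_incidence_wf : interpretation_wf IS_adj_in_incidence.
Proof. by move=> z fo so i j /= -> -> ->. Qed.

Lemma interprets_incidence (G : graph) :
  interprets incidence_in_IS (incidence G) (IS_adj G) (vertex_set G).
Proof.
move=> z v V i j HZ; rewrite /incidence_in_IS /MAnd /= HZ !inE.
case: (v i) => [x|e]; case: (v j) => [y|f] /=.
all: try case: (x != y); try case: (x \in sval f); try case: (y \in sval e).
all: by intuition.
Qed.

Lemma interprets_IS_adj (G : graph) :
  interprets IS_adj_in_incidence (IS_adj G) (incidence G) (vertex_set G).
Proof.
move=> z v V i j HZ; rewrite /IS_adj_in_incidence /MAnd /= HZ !inE.
case: (v i) => [x|e]; case: (v j) => [y|f] /=.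
- have inlE : (inl x = inl y :> (gV G + edge_of G)%type) <-> x = y by split=> [[]|->].
  rewrite inlE; case: (eqVneq x y) => [->|/eqP ne]; by intuition.
all: try case: (x \in sval f); try case: (y \in sval e).
all: by intuition.
Qed.

Lemma MSO2_orderable_iff_IS (C : graph -> Prop) :
  MSO2_orderable C <-> MSO1_orderable (IS_class C).
Proof.
rewrite MSO1_orderable_IS_class; split.
- exact: orderable_by_transfer incidence_in_IS_wf interprets_incidence.
- exact: orderable_by_transfer IS_adj_in_incidence_wf interprets_IS_adj.
Qed.

Section InducedSubgraph.
Variables (G : graph) (P : pred (gV G)).

Definition induced_adj : rel {x : gV G | P x} := fun a b => gadj (val a) (val b).

Lemma induced_adj_sym : symmetric induced_adj.
Proof. by move=> a b; rewrite /induced_adj gadj_sym. Qed.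

Lemma induced_adj_irr : irreflexive induced_adj.
Proof. by move=> a; rewrite /induced_adj gadj_irr. Qed.

Definition induced : graph :=
  @Graph {x : gV G | P x} induced_adj induced_adj_sym induced_adj_irr.
End InducedSubgraph.

Definition cut_labelling (G : graph) (k m : nat) (part : gV G -> 'I_m)
    (lab : gV G -> 'I_k) (R : rel 'I_k) : Prop :=
  (forall i, exists x, part x = i) /\
  (forall x y, part x != part y ->
     gadj x y = R (lab x) (lab y) || R (lab y) (lab x)).

(* Cut decompositions are exactly such labelled partitions: the operands
   are the parts, seen as induced subgraphs. *)
Lemma cut_decompP (G : graph) (k m : nat) :
  cut_decomp G k m <-> exists part lab R, cut_labelling G k m part lab R.
Proof.
split.
- case=> H [p [R [Hne [f [[g fg gf] Hf]]]]].
  exists (fun x => tag (f x)), (fun x => p _ (tagged (f x))), R; split.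
  + move=> i; case/card_gt0P: (Hne i) => h _.
    by exists (g (Tagged (fun i => gV (H i)) h)); rewrite gf.
  + by move=> x y ne; rewrite Hf /glue (negbTE ne).
- case=> part [lab [R [part_surj cross]]].
  pose H i := induced G [pred x | part x == i].
  exists H, (fun i (a : gV (H i)) => lab (val a)), R; split.
    move=> i; case: (part_surj i) => x Ex; apply/card_gt0P.
    by exists (exist _ x (introT eqP Ex) : gV (H i)).
  pose f x := Tagged (fun i => gV (H i)) (exist _ x (eqxx (part x)) : gV (H (part x))).
  have val_tagged_as (u v : {i : 'I_m & gV (H i)}) :
      tag u = tag v -> val (tagged_as u v) = val (tagged v).
    by case: u v => [i a] [j b] /= E; subst j; rewrite tagged_asE.
  exists f; split.
  + apply: (@Bijective _ _ f (fun u : {i : 'I_m & gV (H i)} => val (tagged u))) => //.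
    move=> [i [y py]] /=.
    by have E := eqP py; subst i; rewrite /f (bool_irrelevance py (eqxx _)).
  + move=> x y; rewrite /glue; case: eqP => [E|/eqP ne].
    * by rewrite /= /induced_adj (val_tagged_as (f x) (f y) E).
    * by rewrite cross.
Qed.

Section EdgesAndSeparations.
Variable G : graph.

Lemma edgeP (e : edge_of G) : exists x y, gadj x y /\ val e = [set x; y].
Proof. by case/existsP: (valP e) => x /existsP [y /andP [hxy /eqP E]]; exists x, y. Qed.

Lemma card_edge (e : edge_of G) : #|val e| <= 2.
Proof. by case: (edgeP e) => x [y [_ ->]]; rewrite cards2; case: (x != y). Qed.

Lemma edge_adj (e : edge_of G) u v : u \in val e -> v \in val e -> u != v -> gadj u v.
Proof.
case: (edgeP e) => a [b [hab ->]]; rewrite !inE.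
by move=> /orP[]/eqP-> /orP[]/eqP->; rewrite ?eqxx // gadj_sym.
Qed.

Lemma edge_third_end (e : edge_of G) u v w : u \in val e -> v \in val e -> w \in val e ->
  u != v -> u != w -> v = w.
Proof.
case: (edgeP e) => a [b [_ ->]]; rewrite !inE.
by move=> /orP[]/eqP-> /orP[]/eqP-> /orP[]/eqP->; rewrite ?eqxx.
Qed.

Lemma is_edge_pair {x y : gV G} : gadj x y -> is_edge G [set x; y].
Proof. by move=> h; apply/existsP; exists x; apply/existsP; exists y; rewrite h eqxx. Qed.

Definition mk_edge (x y : gV G) (h : gadj x y) : edge_of G :=
  exist _ [set x; y] (is_edge_pair h).

Lemma del_adj_sym (S : {set gV G}) : symmetric (del_adj G S).
Proof. by move=> x y; rewrite /del_adj gadj_sym; case: (x \in S); case: (y \in S). Qed.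

Lemma connect_del_adj_mem {S : {set gV G}} {x y : gV G} :
  connect (del_adj G S) x y -> (x \in S) = (y \in S).
Proof.
have closedS : closed (del_adj G S) (~: S).
  by move=> z w /and3P[nz nw _]; rewrite !in_setC nz nw.
by move=> /(closed_connect closedS); rewrite !in_setC => /negb_inj.
Qed.

Definition component_roots (S : {set gV G}) : {set gV G} :=
  [set r | roots (del_adj G S) r & r \notin S].

Lemma ncomp_minusE (S : {set gV G}) : ncomp_minus G S = #|component_roots S|.
Proof. by apply: eq_card => r; rewrite !inE. Qed.

End EdgesAndSeparations.
Arguments edge_adj {G e u v}.
Arguments mk_edge {G x y}.
Arguments component_roots {G}.
Arguments ncomp_minusE {G}.
Arguments del_adj_sym {G}.
Arguments connect_del_adj_mem {G S x y}.
Arguments edge_third_end {G e u v w}.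

(* From a cut decomposition of IS(G) with [k] labels and [m] parts we
   extract a small separator [S] of [G]: the vertices incident to an edge
   placed in another part. *)
Section CutToSeparator.
Context {G : graph} {k m : nat}.
Context {part : gV G + edge_of G -> 'I_m} {lab : gV G + edge_of G -> 'I_k}.
Context {R : rel 'I_k}.
(* [cross] is only needed to bound the boundary; the count of parts holds
   for any partition. *)
Hypothesis part_surj : forall i, exists x, part x = i.
Hypothesis cross : forall x y, part x != part y ->
  IS_adj G x y = R (lab x) (lab y) || R (lab y) (lab x).

Definition boundary : {set gV G} :=
  [set u | [exists e : edge_of G, (u \in val e) && (part (inr e) != part (inl u))]].

Lemma mem_boundary {e : edge_of G} {u : gV G} :
  u \in val e -> part (inr e) != part (inl u) -> u \in boundary.
Proof. by move=> ue pe; rewrite inE; apply/existsP; exists e; rewrite ue pe. Qed.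

(* Incidence across parts only depends on labels: if [u] is an end of [e]
   lying in another part, every vertex with the label of [u] lying outside
   the part of [e] is an end of [e] too. *)
Lemma same_label_end {e : edge_of G} {u w : gV G} :
  u \in val e -> part (inr e) != part (inl u) ->
  lab (inl w) = lab (inl u) -> part (inl w) != part (inr e) -> w \in val e.
Proof.
move=> ue pe lw pw; have := cross _ _ pe; rewrite /= ue => Ru.
by have := cross _ _ pw; rewrite /= lw orbC -Ru.
Qed.

(* The boundary vertices of a given label lie on at most two edges: the
   edge witnessing one of them, and the edge witnessing one of those that
   share the part of the first edge. *)
Lemma boundary_label_cover {a : 'I_k} {u : gV G} :
  u \in boundary -> lab (inl u) = a ->
  exists e f : edge_of G, [set w in boundary | lab (inl w) == a] \subset val e :|: val f.
Proof.
rewrite inE => /existsP[e /andP[ue pe]] lu.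
have end_e w : lab (inl w) == a -> part (inl w) != part (inr e) -> w \in val e.
  by move=> /eqP lw; apply: same_label_end ue pe _; rewrite lw lu.
case: (pickP [pred w | (w \in boundary) && (lab (inl w) == a) && (part (inl w) == part (inr e))]).
- move=> w0 /andP[/andP[]]; rewrite inE => /existsP[f /andP[w0f pf]] /eqP lw0 /eqP pw0.
  have pf' : part (inl w0) != part (inr f) by rewrite eq_sym.
  exists e, f; apply/subsetP => w; rewrite !inE => /andP[_ lw].
  case: (eqVneq (part (inl w)) (part (inr e))) => [pw|pw]; last by rewrite end_e.
  apply/orP; right; apply: (same_label_end w0f pf); first by rewrite lw0; apply/eqP.
  by rewrite pw -pw0.
- move=> none; exists e, e; apply/subsetP => w; rewrite setUid inE => /andP[wS lw].
  by apply: (end_e _ lw); have := none w; rewrite /= wS lw /= => /negbT.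
Qed.

Lemma boundary_label_small (a : 'I_k) : #|[set u in boundary | lab (inl u) == a]| <= 4.
Proof.
have [/eqP->|/set0Pn[u]] := boolP ([set u in boundary | lab (inl u) == a] == set0).
  by rewrite cards0.
rewrite inE => /andP[uS /eqP lu]; case: (boundary_label_cover uS lu) => e [f sub].
apply: leq_trans (subset_leq_card sub) _; apply: leq_trans (leq_card_setU _ _) _.
by rewrite -[4]/(2 + 2) leq_add // card_edge.
Qed.

Lemma card_boundary : #|boundary| <= 4 * k.
Proof.
have -> : #|boundary| = \sum_(a < k) #|[set u in boundary | lab (inl u) == a]|.
  rewrite -sum1_card (partition_big (fun u => lab (inl u)) predT) //=.
  by apply: eq_bigr => a _; rewrite -sum1_card; apply: eq_bigl => u; rewrite !inE.
apply: (@leq_trans (\sum_(a < k) 4)); first by apply: leq_sum => a _; apply: boundary_label_small.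
by rewrite sum_nat_const card_ord mulnC.
Qed.

Lemma interior_edge_part {u v : gV G} :
  gadj u v -> u \notin boundary -> v \notin boundary -> part (inl u) = part (inl v).
Proof.
move=> uv nu nv; pose e := mk_edge uv.
have part_e w : w \in val e -> w \notin boundary -> part (inr e) = part (inl w).
  by move=> we; apply: contraNeq => /(mem_boundary we).
by rewrite -(part_e u) // ?(part_e v) // !inE eqxx ?orbT.
Qed.

Lemma connect_part {x y : gV G} :
  connect (del_adj G boundary) x y -> part (inl x) = part (inl y).
Proof.
move=> cxy; apply/eqP.
have := @closed_connect _ _ [pred z | part (inl z) == part (inl x)] _ _ _ cxy.
rewrite !inE eqxx eq_sym => <- //.
by move=> z w /and3P[nz nw zw]; rewrite !inE (interior_edge_part zw nz nw).
Qed.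

Lemma part_cover i :
  i \in [set part (inl u) | u in boundary]
    :|: [set part (inl r) | r in component_roots boundary]
    :|: [set part (inr e) | e in [set e : edge_of G | val e \subset boundary]].
Proof.
rewrite !inE; case: (pickP [pred u | part (inl u) == i]) => [u /eqP pu|none].
- case: (boolP (u \in boundary)) => uS.
    by apply/orP; left; apply/orP; left; apply/imsetP; exists u.
  have cur := connect_root (del_adj G boundary) u.
  apply/orP; left; apply/orP; right; apply/imsetP; exists (root (del_adj G boundary) u).
  + rewrite inE (roots_root (sym_connect_sym (del_adj_sym boundary))).
    by rewrite -(connect_del_adj_mem cur).
  + by rewrite -(connect_part cur) pu.
- case: (part_surj i) => -[u|e] pe; first by have := none u; rewrite /= pe eqxx.
  apply/orP; right; apply/imsetP; exists e => //; rewrite inE; apply/subsetP => w we.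
  by apply: (mem_boundary we); rewrite pe eq_sym; have := none w; rewrite /= => ->.
Qed.

Lemma parts_bound :
  m <= #|boundary| + 2 ^ #|boundary| + ncomp_minus G boundary.
Proof.
rewrite -{1}(card_ord m) -cardsT (ncomp_minusE boundary).
apply: leq_trans (subset_leq_card (_ : [set: 'I_m] \subset _)) _.
  by apply/subsetP => i _; apply: part_cover.
apply: leq_trans (leq_card_setU _ _) _; rewrite addnAC.
apply: leq_add; first apply: leq_trans (leq_card_setU _ _) _; first apply: leq_add.
- exact: leq_imset_card.
- exact: leq_imset_card.
- apply: leq_trans (leq_imset_card _ _) _; rewrite -card_powerset.
  rewrite -(card_imset _ val_inj); apply: subset_leq_card; apply/subsetP => X /imsetP[e].
  by rewrite inE powersetE => eS ->.
Qed.

End CutToSeparator.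

Lemma cut_IS_separator (G : graph) (k m : nat) : cut_decomp (IS G) k m ->
  exists S : {set gV G}, #|S| <= 4 * k /\ m <= #|S| + 2 ^ #|S| + ncomp_minus G S.
Proof.
case/cut_decompP => part [lab [R [part_surj cross]]].
by exists (@boundary G m part); split; [exact: card_boundary cross | exact: parts_bound part_surj].
Qed.

(* Conversely, a set [S] of at most [k] vertices whose removal leaves
   [c > 0] components yields a cut decomposition of IS(G) into [c] parts
   with [2k + 2] labels: a component of [G - S] together with the edges
   having an end in it forms one part, and [S] with the edges inside [S]
   is added to the part of a fixed component [x0]. *)
Section SeparatorToCut.
Variables (G : graph) (S : {set gV G}) (k : nat).
Hypothesis card_S : #|S| <= k.
Variables (x0 : gV G) (x0_root : x0 \in component_roots S).

Let X := (gV G + edge_of G)%type.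
Let comp (x : gV G) : 'I_#|component_roots S| :=
  enum_rank_in x0_root (root (del_adj G S) x).

Let outer_end (e : edge_of G) := [pick u in val e | u \notin S].
Let inner_end (e : edge_of G) := [pick u in val e | u \in S].

Let part (x : X) : 'I_#|component_roots S| :=
  match x with
  | inl v => if v \in S then comp x0 else comp v
  | inr e => if outer_end e is Some u then comp u else comp x0
  end.

Let idx (s : gV G) : nat := index s (enum S).

(* Label codes: [0] for vertices outside [S], [2 + idx s] for [s] in [S],
   [2 + k + idx s] for an edge joining [s] to a vertex outside [S], and
   [1] for the remaining edges. *)
Let code (x : X) : nat :=
  match x with
  | inl v => if v \in S then 2 + idx v else 0
  | inr e => if outer_end e is Some _ then
               (if inner_end e is Some s then 2 + k + idx s else 1) else 1
  end.

(* Outside vertices see each other and [S]; [S] is a clique; the vertex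
   [s] sees the edges from [s] to the outside. *)
Let code_rel (a b : nat) : bool :=
  [|| (a == 0) && (b == 0), (a == 0) && (2 <= b < 2 + k),
      (2 <= a < 2 + k) && (2 <= b < 2 + k) | (2 <= a < 2 + k) && (b == a + k)].

Let lab (x : X) : 'I_(2 * k + 1).+1 := inord (code x).
Let R : rel 'I_(2 * k + 1).+1 := fun a b => code_rel a b.

Lemma idx_lt {s : gV G} : s \in S -> idx s < k.
Proof. by move=> sS; apply: leq_trans card_S; rewrite cardE /idx index_mem mem_enum. Qed.

Lemma idx_inj {s t : gV G} : s \in S -> t \in S -> idx s = idx t -> s = t.
Proof.
move=> sS tS E; rewrite -(nth_index s (_ : s \in enum S)) ?mem_enum //.
by rewrite -/(idx s) E /idx nth_index // mem_enum.
Qed.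

(* Codes are below [2k + 2], so [inord] does not truncate them. *)
Lemma code_lt x : code x < (2 * k + 1).+1.
Proof.
case: x => [v|e] /=; first by case vS: (v \in S) => //; have := idx_lt vS; lia.
case: (outer_end e) => [_|]; last lia.
by rewrite /inner_end; case: pickP => [s /andP[_ sS]|_]; [have := idx_lt sS; lia | lia].
Qed.

Lemma labE x : val (lab x) = code x.
Proof. exact: inordK (code_lt x). Qed.

Lemma vertex_code v : (code (inl v) == 0) || (2 <= code (inl v) < 2 + k).
Proof. by rewrite /=; case vS: (v \in S) => //; have := idx_lt vS; lia. Qed.

Lemma edge_code (e : edge_of G) : (code (inr e) == 1) || (2 + k <= code (inr e)).
Proof. by rewrite /=; case: (outer_end e) => // _; case: (inner_end e) => // s; lia. Qed.

Lemma comp_connect {u v : gV G} : connect (del_adj G S) u v -> comp u = comp v.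
Proof.
by move=> uv; rewrite /comp; congr enum_rank_in; apply/(rootP (sym_connect_sym (del_adj_sym S))).
Qed.

Lemma part_edge {e : edge_of G} {v : gV G} :
  v \in val e -> v \notin S -> part (inr e) = comp v.
Proof.
move=> ve vS; rewrite /= /outer_end; case: pickP => [u /andP[ue uS]|none]; last first.
  by have := none v; rewrite /= ve vS.
apply: comp_connect; case: (eqVneq u v) => [->//|ne].
by apply: connect1; rewrite /del_adj uS vS (edge_adj ue ve ne).
Qed.

(* Each part contains the root of its component. *)
Lemma part_surj i : exists x, part x = i.
Proof.
have := enum_valP i; rewrite inE => /andP[rootv vS].
exists (inl (enum_val i)); rewrite /= (negbTE vS) /comp.
by move/eqP: rootv => ->; rewrite enum_valK_in.
Qed.

Lemma cross_vertex_edge v (e : edge_of G) : part (inl v) != part (inr e) ->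
  (v \in val e) = R (lab (inl v)) (lab (inr e)) || R (lab (inr e)) (lab (inl v)).
Proof.
move=> ne; rewrite /R !labE /=.
case: (boolP (v \in S)) => vS; last first.
  have -> : (v \in val e) = false.
    by apply/negP => ve; move: ne; rewrite (part_edge ve vS) /= (negbTE vS) eqxx.
  by case: (outer_end e) => [?|]; [case: (inner_end e) => [?|]|]; rewrite /code_rel; lia.
move: ne; rewrite /= vS /outer_end.
case: pickP => [u /andP[ue uS]|none] ne; last by rewrite eqxx in ne.
rewrite /inner_end; case: pickP => [s /andP[se sS]|none_in].
- have -> : (v \in val e) = (idx s == idx v).
    apply/idP/eqP => [ve|E]; last by rewrite -(idx_inj sS vS E).
    by rewrite (edge_third_end ue se ve) //; apply/eqP => E; subst; rewrite ?sS ?vS in uS.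
  rewrite /code_rel; have := idx_lt sS; have := idx_lt vS.
  by case: (eqVneq (idx s) (idx v)) => [->|]; lia.
- have -> : (v \in val e) = false by have := none_in v; rewrite /= vS andbT.
  by rewrite /code_rel; have := idx_lt vS; lia.
Qed.

(* Labels decide adjacency in IS(G) across parts: vertices form a clique,
   edges are pairwise non-adjacent. *)
Lemma cross x y : part x != part y ->
  IS_adj G x y = R (lab x) (lab y) || R (lab y) (lab x).
Proof.
case: x => [v|e]; case: y => [w|f] ne.
- have vw : v != w by apply: contraNneq ne => ->.
  by rewrite /= vw /R !labE /code_rel; have := vertex_code v; have := vertex_code w; lia.
- exact: cross_vertex_edge.
- by rewrite IS_adj_sym orbC; apply: cross_vertex_edge; rewrite eq_sym.
- by rewrite /= /R !labE /code_rel; have := edge_code e; have := edge_code f; lia.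
Qed.

End SeparatorToCut.

Lemma separator_cut_IS {G : graph} {S : {set gV G}} {k : nat} :
  #|S| <= k -> 0 < ncomp_minus G S ->
  cut_decomp (IS G) (2 * k + 1).+1 (ncomp_minus G S).
Proof.
move=> card_S; rewrite ncomp_minusE => /card_gt0P[x0 x0_root].
apply/cut_decompP; do 3 eexists; split.
- exact: (@part_surj G S x0 x0_root).
- exact: (@cross G S k card_S x0 x0_root).
Qed.

Lemma SEP_CUT_IS (C : graph -> Prop) : SEP C -> CUT (IS_class C).
Proof.
case=> f sep_f; exists (fun k => 4 * k + 2 ^ (4 * k) + f (4 * k)).
move=> _ [G [CG ->]] k m /cut_IS_separator[S [card_S parts_S]].
apply: leq_trans parts_S _; rewrite !leq_add ?leq_pexp2l //.
apply: leq_trans (sep_f G CG (4 * k)).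
exact: (@leq_bigmax_cond _ (fun S : {set gV G} => #|S| <= 4 * k) (ncomp_minus G) S).
Qed.

Lemma CUT_IS_SEP (C : graph -> Prop) : CUT (IS_class C) -> SEP C.
Proof.
case=> f cut_f; exists (fun k => f (2 * k + 1).+1) => G CG k.
apply/bigmax_leqP => S card_S; case: (posnP (ncomp_minus G S)) => [->//|pos].
have IS_G : IS_class C (IS G) by exists G.
exact: cut_f IS_G _ _ (separator_cut_IS card_S pos).
Qed.

Theorem proposition6p3 (C : graph -> Prop) :
  (MSO2_orderable C <-> MSO1_orderable (IS_class C)) /\
  (SEP C <-> CUT (IS_class C)).
Proof.
split; first exact: MSO2_orderable_iff_IS.
by split; [exact: SEP_CUT_IS | exact: CUT_IS_SEP].
Qed.
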